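(* Let $\mathcal{G}=(V,E_L,E_R)$ be an achievement positional game and let $u,v\in V$ with $\{u\},\{v\}\notin E_L\cup E_R$, such that for every $e\in E_L\cup E_R$, $u\in e$ implies $v\in e$. Then: (i) $o(\mathcal{G}_u)\le_L o(\mathcal{G}_v)$; (ii) $o(\mathcal{G}^v)\le_L o(\mathcal{G}^u)$; (iii) if $u \neq v$, then $o(\mathcal{G}_u^v)\le_L o(\mathcal{G})\le_L o(\mathcal{G}_v^u)$.
   Context: A hypergraph is a pair $(V,E)$ with $V$ finite and $E\subseteq 2^V\setminus\{\varnothing\}$. An achievement positional game is a triple $\mathcal{G}=(V,E_L,E_R)$ where $(V,E_L)$ and $(V,E_R)$ are hypergraphs; elements of $E_L$ are blue edges, elements of $E_R$ are red edges. Two players, Left and Right, alternately pick a previously unpicked vertex of $V$ (either player may be designated to start). A player fills an edge when they have picked all its vertices. If Left fills a blue edge before Right fills a red edge, Left wins; if Right fills a red edge before Left fills a blue edge, Right wins; if neither happens before all vertices are picked, the game is a draw. For a set of edges $E$ and a set of vertices $S$, let $E^{+S}=\{e\setminus S : e\in E\}$ and $E^{-S}=\{e\in E : e\cap S=\varnothing\}$. If Left has picked the set $V_L$ and Right the set $V_R$, the updated game is $\mathcal{G}_{V_L}^{V_R}=(V\setminus(V_L\cup V_R),\,E_L^{+V_L-V_R},\,E_R^{+V_R-V_L})$; singleton brackets and empty sub/superscripts are omitted (so $\mathcal{G}_u$: Left picked $u$; $\mathcal{G}^v$: Right picked $v$; $\mathcal{G}_u^v$: Left picked $u$ and Right picked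 $v$). The outcome $o(\mathcal{G})$ is the pair (result under optimal play when Left starts, result under optimal play when Right starts). The partial order $\le_L$ on outcomes is the componentwise order, where in each component results are ordered Right wins $<$ draw $<$ Left wins. *)

From mathcomp Require Import all_boot all_order.
Set Implicit Arguments. Unset Strict Implicit. Unset Printing Implicit Defensive.

Record game (T : finType) := Game {
  gV : {set T};
  gEL : {set {set T}};
  gER : {set {set T}} }.

Definition hypergraph (T : finType) (V : {set T}) (E : {set {set T}}) :=
  forall e, e \in E -> e != set0 /\ e \subset V.

Definition is_game (T : finType) (G : game T) :=
  hypergraph (gV G) (gEL G) /\ hypergraph (gV G) (gER G).

Definition eplus (T : finType) (E : {set {set T}}) (S : {set T}) :=
  [set e :\: S | e in E].
Definition eminus (T : finType) (E : {set {set T}}) (S : {set T}) :=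
  [set e in E | [disjoint e & S]].

Definition update (T : finType) (G : game T) (VL VR : {set T}) : game T :=
  Game (gV G :\: (VL :|: VR))
       (eminus (eplus (gEL G) VL) VR)
       (eminus (eplus (gER G) VR) VL).

Inductive result := RightWins | Draw | LeftWins.

Definition rank (r : result) : nat :=
  match r with RightWins => 0 | Draw => 1 | LeftWins => 2 end.

Definition rmax (a b : result) := if rank a <= rank b then b else a.
Definition rmin (a b : result) := if rank a <= rank b then a else b.

(* Value of the game under optimal play; [lt] = true iff Left is to move.
   A move on x fills an edge e of the mover's colour iff e \subset [set x]
   (i.e. the edge's remaining vertices are all picked).  The fuel n is the number of remaining vertices. *)
Fixpoint value (T : finType) (n : nat) (G : game T) (lt : bool) : result :=
  match n with
  | 0 => Draw
  | n'.+1 =>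
    if gV G == set0 then Draw else
    if lt then
      foldr (fun x acc => rmax
          (if [exists e in gEL G, e \subset [set x]] then LeftWins
           else value n' (update G [set x] set0) false) acc)
        RightWins (enum (gV G))
    else
      foldr (fun x acc => rmin
          (if [exists e in gER G, e \subset [set x]] then RightWins
           else value n' (update G set0 [set x]) true) acc)
        LeftWins (enum (gV G))
  end.

Definition outcome (T : finType) (G : game T) : result * result :=
  (value #|gV G| G true, value #|gV G| G false).

Definition outcome_le (o1 o2 : result * result) : Prop :=
  rank o1.1 <= rank o2.1 /\ rank o1.2 <= rank o2.2.

From mathcomp Require Import all_boot all_order perm.
Set Implicit Arguments. Unset Strict Implicit. Unset Printing Implicit Defensive.

(* (i) and (ii): the transposition of u and v maps G_u onto G_v (resp. G^v onto
   G^u) so that Left's remaining edges only shrink and Right's only grow, and a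
   simulation argument shows that such a relabelling can only help Left.
   (iii): in G, Left answers a move of Right on u or v by the other vertex.  Since
   every edge through u passes through v, the position reached is at least as
   good for Left as the corresponding position of G_u^v, while all other moves are
   mirrored between G_u^v and G.  The second inequality is the first one for the
   game with the colours exchanged. *)

Lemma rank_rmax a b : rank (rmax a b) = maxn (rank a) (rank b).
Proof. by case: a; case: b. Qed.

Lemma rank_rmin a b : rank (rmin a b) = minn (rank a) (rank b).
Proof. by case: a; case: b. Qed.

Lemma rank_le2 r : rank r <= 2.
Proof. by case: r. Qed.

Section Folds.
Variables (I : eqType) (F : I -> result).

Lemma foldr_rmax_ub s x : x \in s ->
  rank (F x) <= rank (foldr (fun y acc => rmax (F y) acc) RightWins s).
Proof.
elim: s => //= y s IHs; rewrite inE rank_rmax => /predU1P [->|/IHs]; first exact: leq_maxl.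
by move/leq_trans; apply; apply: leq_maxr.
Qed.

Lemma foldr_rmax_lub s r : {in s, forall x, rank (F x) <= rank r} ->
  rank (foldr (fun y acc => rmax (F y) acc) RightWins s) <= rank r.
Proof.
elim: s => //= y s IHs Fs; rewrite rank_rmax geq_max Fs ?mem_head //.
by apply: IHs => x xs; rewrite Fs // inE xs orbT.
Qed.

Lemma foldr_rmin_lb s x : x \in s ->
  rank (foldr (fun y acc => rmin (F y) acc) LeftWins s) <= rank (F x).
Proof.
elim: s => //= y s IHs; rewrite inE rank_rmin => /predU1P [->|/IHs]; first exact: geq_minl.
by apply: leq_trans; apply: geq_minr.
Qed.

Lemma foldr_rmin_glb s r : {in s, forall x, rank r <= rank (F x)} ->
  rank r <= rank (foldr (fun y acc => rmin (F y) acc) LeftWins s).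
Proof.
elim: s => [|y s IHs Fs] /=; first by rewrite rank_le2.
rewrite rank_rmin leq_min Fs ?mem_head //.
by apply: IHs => x xs; rewrite Fs // inE xs orbT.
Qed.

End Folds.

Section Moves.
Variable T : finType.
Implicit Types (G : game T) (x : T) (n : nat).

Definition lmove n G x :=
  if [exists e in gEL G, e \subset [set x]] then LeftWins
  else value n (update G [set x] set0) false.

Definition rmove n G x :=
  if [exists e in gER G, e \subset [set x]] then RightWins
  else value n (update G set0 [set x]) true.

Lemma value_true n G : value n.+1 G true =
  if gV G == set0 then Draw
  else foldr (fun x acc => rmax (lmove n G x) acc) RightWins (enum (gV G)).
Proof. by []. Qed.

Lemma value_false n G : value n.+1 G false =
  if gV G == set0 then Draw
  else foldr (fun x acc => rmin (rmove n G x) acc) LeftWins (enum (gV G)).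
Proof. by []. Qed.

Lemma lmove_le_value n G x : x \in gV G ->
  rank (lmove n G x) <= rank (value n.+1 G true).
Proof.
move=> xG; rewrite value_true ifN; last by apply/set0Pn; exists x.
by apply: foldr_rmax_ub; rewrite mem_enum.
Qed.

Lemma value_le_lmoves n G r : gV G != set0 ->
  {in gV G, forall x, rank (lmove n G x) <= rank r} -> rank (value n.+1 G true) <= rank r.
Proof.
move=> /negbTE G0 Gr; rewrite value_true G0.
by apply: foldr_rmax_lub => x; rewrite mem_enum; apply: Gr.
Qed.

Lemma value_le_rmove n G x : x \in gV G ->
  rank (value n.+1 G false) <= rank (rmove n G x).
Proof.
move=> xG; rewrite value_false ifN; last by apply/set0Pn; exists x.
by apply: foldr_rmin_lb; rewrite mem_enum.
Qed.

Lemma rmoves_le_value n G r : gV G != set0 ->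
  {in gV G, forall x, rank r <= rank (rmove n G x)} -> rank r <= rank (value n.+1 G false).
Proof.
move=> /negbTE G0 Gr; rewrite value_false G0.
by apply: foldr_rmin_glb => x; rewrite mem_enum; apply: Gr.
Qed.

Lemma value_le_lmove n G x :
  rank (value n (update G [set x] set0) false) <= rank (lmove n G x).
Proof. by rewrite /lmove; case: ifP; rewrite ?rank_le2. Qed.

Lemma eplus_set0 (E : {set {set T}}) : eplus E set0 = E.
Proof. by rewrite /eplus (eq_imset (g := id)) ?imset_id // => e; rewrite setD0. Qed.

Lemma eminus_set0 (E : {set {set T}}) : eminus E set0 = E.
Proof. by apply/setP => e; rewrite inE -setI_eq0 setI0 eqxx andbT. Qed.

Lemma gV_updL G x : gV (update G [set x] set0) = gV G :\ x.
Proof. by rewrite /= setU0. Qed.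

Lemma gV_updR G x : gV (update G set0 [set x]) = gV G :\ x.
Proof. by rewrite /= set0U. Qed.

Lemma gEL_updL G x f :
  reflect (exists2 e, e \in gEL G & f = e :\ x) (f \in gEL (update G [set x] set0)).
Proof. by rewrite /= eminus_set0; apply: imsetP. Qed.

Lemma gER_updR G x f :
  reflect (exists2 e, e \in gER G & f = e :\ x) (f \in gER (update G set0 [set x])).
Proof. by rewrite /= eminus_set0; apply: imsetP. Qed.

Lemma gER_updL G x f :
  (f \in gER (update G [set x] set0)) = (f \in gER G) && (x \notin f).
Proof. by rewrite /= eplus_set0 inE disjoint_sym disjoints1. Qed.

Lemma gEL_updR G x f :
  (f \in gEL (update G set0 [set x])) = (f \in gEL G) && (x \notin f).
Proof. by rewrite /= eplus_set0 inE disjoint_sym disjoints1. Qed.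

End Moves.

Section Relabel.
Variables (T : finType) (phi : T -> T).
Hypothesis phi_inj : injective phi.
Implicit Types (G H : game T) (x : T).

(* [H] is at least as good for Left as [G] up to renaming vertices by [phi]:
   Left's edges only shrink and Right's only grow. *)
Record relabel_le G H : Prop := RelabelLe {
  relabel_gV : gV H = phi @: gV G;
  relabel_gEL : forall e, e \in gEL G -> exists2 f, f \in gEL H & f \subset phi @: e;
  relabel_gER : forall f, f \in gER H -> exists2 e, e \in gER G & phi @: e \subset f }.

Lemma imset_setD1 (A : {set T}) x : phi @: (A :\ x) = phi @: A :\ phi x.
Proof.
apply/setP => z; apply/imsetP/setD1P => [[y /setD1P [yx yA] ->]|[zx /imsetP [y yA zE]]].
  by rewrite (inj_eq phi_inj) imset_f.
by exists y; rewrite // !inE yA andbT -(inj_eq phi_inj) -zE.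
Qed.

Lemma relabel_le_updL G H x : relabel_le G H ->
  relabel_le (update G [set x] set0) (update H [set phi x] set0).
Proof.
case=> hV hL hR; split.
- by rewrite !gV_updL hV imset_setD1.
- move=> _ /gEL_updL [e eG ->]; have [f fH fe] := hL e eG.
  exists (f :\ phi x); first by apply/gEL_updL; exists f.
  by rewrite imset_setD1 setSD.
- move=> f; rewrite gER_updL => /andP [fH xf]; have [e eG ef] := hR f fH.
  exists e => //; rewrite gER_updL eG.
  by apply: contra xf => xe; apply: (subsetP ef); apply: imset_f.
Qed.

Lemma relabel_le_updR G H x : relabel_le G H ->
  relabel_le (update G set0 [set x]) (update H set0 [set phi x]).
Proof.
case=> hV hL hR; split.
- by rewrite !gV_updR hV imset_setD1.
- move=> e; rewrite gEL_updR => /andP [eG xe]; have [f fH fe] := hL e eG.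
  exists f => //; rewrite gEL_updR fH.
  by apply: contra xe => /(subsetP fe); rewrite mem_imset.
- move=> _ /gER_updR [f fH ->]; have [e eG ef] := hR f fH.
  exists (e :\ x); first by apply/gER_updR; exists e.
  by rewrite imset_setD1 setSD.
Qed.

Lemma relabel_le_lwin G H x : relabel_le G H ->
  [exists e in gEL G, e \subset [set x]] -> [exists f in gEL H, f \subset [set phi x]].
Proof.
case=> _ hL _ /existsP [e /andP [eG ex]]; have [f fH fe] := hL e eG.
apply/existsP; exists f; rewrite fH (subset_trans fe) //.
by rewrite -imset_set1 imsetS.
Qed.

Lemma relabel_le_rwin G H x : relabel_le G H ->
  [exists f in gER H, f \subset [set phi x]] -> [exists e in gER G, e \subset [set x]].
Proof.
case=> _ _ hR /existsP [f /andP [fH fx]]; have [e eG ef] := hR f fH.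
apply/existsP; exists e; rewrite eG; apply/subsetP => y ye.
by have := subsetP fx _ (subsetP ef _ (imset_f phi ye)); rewrite !inE (inj_eq phi_inj).
Qed.

Lemma value_relabel_le n G H b : relabel_le G H ->
  rank (value n G b) <= rank (value n H b).
Proof.
elim: n G H b => [//|n IHn] G H b GH.
have V0 : (gV H == set0) = (gV G == set0) by rewrite (relabel_gV GH) imset_eq0.
have [G0|GN] := eqVneq (gV G) set0.
  by case: b; rewrite ?value_true ?value_false V0 G0 eqxx.
case: b.
- apply: value_le_lmoves => // x xG.
  have phixH : phi x \in gV H by rewrite (relabel_gV GH) imset_f.
  apply: leq_trans (lmove_le_value n phixH); rewrite /lmove.
  case: ifP => [/(relabel_le_lwin GH) -> //|_].
  case: ifP => _; first exact: rank_le2.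
  exact/IHn/relabel_le_updL.
- apply: rmoves_le_value; first by rewrite V0.
  move=> y; rewrite (relabel_gV GH) => /imsetP [x xG ->].
  apply: leq_trans (value_le_rmove n xG) _; rewrite /rmove.
  case: ifP => // winG; rewrite ifN; last by apply: contraFN winG; apply: relabel_le_rwin.
  exact/IHn/relabel_le_updR.
Qed.

Lemma outcome_relabel_le G H : relabel_le G H -> outcome_le (outcome G) (outcome H).
Proof.
move=> GH; have cardV : #|gV H| = #|gV G| by rewrite (relabel_gV GH) card_imset.
by rewrite /outcome_le /outcome cardV; split; apply: value_relabel_le.
Qed.

End Relabel.

Section Transposition.
Variables (T : finType) (u v : T).
Local Notation t := (tperm u v).

Lemma mem_imset_tperm (A : {set T}) z : (z \in t @: A) = (t z \in A).
Proof. by rewrite -{1}(tpermK u v z) mem_imset //; apply: perm_inj. Qed.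

Lemma imset_tperm_id (e : {set T}) : u \notin e -> v \notin e -> t @: e = e.
Proof.
move=> ue ve; apply/setP => z; rewrite mem_imset_tperm.
by case: tpermP => [->|->|//]; rewrite (negbTE ue) (negbTE ve).
Qed.

Lemma imset_tperm_setD1 (g : {set T}) : (u \in g -> v \in g) ->
  t @: (g :\ v) \subset g :\ u.
Proof.
move=> uv_g; apply/subsetP => _ /imsetP [z + ->]; rewrite !inE.
case: tpermP => [->|->|/eqP zu _] /andP [zv zg]; first by rewrite eq_sym zv uv_g.
  by rewrite eqxx in zv.
by rewrite zu zg.
Qed.

Lemma imset_tperm_setD1_eq (V : {set T}) : u \in V -> v \in V ->
  t @: (V :\ u) = V :\ v.
Proof.
move=> uV vV; apply/setP => z; rewrite mem_imset_tperm !inE.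
by case: tpermP => [->|->|/eqP zu /eqP zv]; rewrite ?eqxx ?uV ?vV ?zu ?zv // eq_sym.
Qed.

End Transposition.

Section TranspositionRelabel.
Variables (T : finType) (u v : T) (G : game T).
Local Notation t := (tperm u v).
Hypotheses (uG : u \in gV G) (vG : v \in gV G).
Hypothesis uv_edge : forall e, e \in gEL G :|: gER G -> u \in e -> v \in e.

Let uv_blue e : e \in gEL G -> u \in e -> v \in e.
Proof. by move=> eG; apply: uv_edge; rewrite inE eG. Qed.

Let uv_red e : e \in gER G -> u \in e -> v \in e.
Proof. by move=> eG; apply: uv_edge; rewrite inE eG orbT. Qed.

Lemma relabel_le_tperm_left :
  relabel_le t (update G [set u] set0) (update G [set v] set0).
Proof.
split.
- by rewrite !gV_updL imset_tperm_setD1_eq.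
- move=> _ /gEL_updL [g gG ->]; exists (g :\ v); first by apply/gEL_updL; exists g.
  apply/subsetP => z zg; rewrite mem_imset_tperm.
  exact: subsetP (imset_tperm_setD1 (uv_blue gG)) _ (imset_f _ zg).
- move=> f; rewrite gER_updL => /andP [fG vf].
  have uf : u \notin f by apply: contra vf; apply: uv_red.
  by exists f; rewrite ?imset_tperm_id // gER_updL fG.
Qed.

Lemma relabel_le_tperm_right :
  relabel_le t (update G set0 [set v]) (update G set0 [set u]).
Proof.
split.
- by rewrite !gV_updR tpermC imset_tperm_setD1_eq.
- move=> e; rewrite gEL_updR => /andP [eG ve].
  have ue : u \notin e by apply: contra ve; apply: uv_blue.
  by exists e; rewrite ?imset_tperm_id // gEL_updR eG.
- move=> _ /gER_updR [g gG ->]; exists (g :\ v); first by apply/gER_updR; exists g.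
  exact: imset_tperm_setD1 (uv_red gG).
Qed.

End TranspositionRelabel.

Lemma relabel_le_id (T : finType) (G H : game T) : gV H = gV G ->
  (forall e, e \in gEL G -> exists2 f, f \in gEL H & f \subset e) ->
  (forall f, f \in gER H -> exists2 e, e \in gER G & e \subset f) ->
  relabel_le id G H.
Proof.
move=> hV hL hR; split; rewrite ?imset_id //.
  by move=> e /hL [f fH fe]; exists f; rewrite ?imset_id.
by move=> f /hR [e eG ef]; exists e; rewrite ?imset_id.
Qed.

Section Pairing.
Variables (T : finType) (u v : T).
Hypothesis uv : u != v.
Implicit Types (A B : game T) (x y w : T) (e f : {set T}).

(* [A] is a position of G_u^v and [B] the position of G reached by the same moves,
   with [u] and [v] still free. *)
Record pair_reduct A B : Prop := PairReduct {
  pair_u : u \in gV B;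
  pair_v : v \in gV B;
  pair_gV : gV A = gV B :\ u :\ v;
  pair_blue : forall f, f \in gEL B -> u \in f -> v \in f;
  pair_red : forall f, f \in gER B -> u \in f -> v \in f;
  pair_gEL : forall e, e \in gEL A -> (e \in gEL B) && (v \notin e);
  pair_gER : forall f, f \in gER B -> u \notin f -> f :\ v \in gER A;
  pair_set0 : set0 \notin gER A }.

Lemma card_pair_reduct A B : pair_reduct A B -> #|gV B| = #|gV A|.+2.
Proof.
case=> uB vB -> *; rewrite (cardsD1 u) uB (cardsD1 v (gV B :\ u)).
by rewrite !inE eq_sym uv vB.
Qed.

Lemma pair_gV_mem A B x : pair_reduct A B -> x \in gV A ->
  [&& x != v, x != u & x \in gV B].
Proof. by move=> AB; rewrite (pair_gV AB) !inE. Qed.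

Lemma pair_gV_split A B y : pair_reduct A B -> y \in gV B ->
  (y \in [set u; v]) || (y \in gV A).
Proof.
by move=> AB yB; rewrite (pair_gV AB) !inE yB andbT; case: (y == u); case: (y == v).
Qed.

Lemma pair_red_not_sub_v A B f : pair_reduct A B -> f \in gER B -> u \notin f ->
  ~~ (f \subset [set v]).
Proof.
move=> AB fB uf; apply/negP => fv; move/negP: (pair_set0 AB); apply.
have /eqP <- : f :\ v == set0 by rewrite setD_eq0.
exact: (pair_gER AB fB uf).
Qed.

Lemma pair_no_rwin A B w : pair_reduct A B -> w \in [set u; v] ->
  ~~ [exists f in gER B, f \subset [set w]].
Proof.
move=> AB /set2P wuv; apply/existsP => -[f /andP [fB fw]].
have uf : u \notin f.
  apply/negP => uf; move/subsetP: fw => fw; move: (fw _ uf) (fw _ (pair_red AB fB uf)).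
  by rewrite !inE => /eqP uw /eqP vw; move: uv; rewrite uw vw eqxx.
apply: (negP (pair_red_not_sub_v AB fB uf)); case: wuv fw => -> // fu.
apply/subsetP => z zf; have /set1P zu := subsetP fu z zf.
by move: zf; rewrite zu (negbTE uf).
Qed.

Lemma pair_reduct_rwin A B y : pair_reduct A B -> y != v ->
  [exists f in gER B, f \subset [set y]] -> [exists e in gER A, e \subset [set y]].
Proof.
move=> AB yv /existsP [f /andP [fB fy]].
have uf : u \notin f.
  apply/negP => uf; have := subsetP fy _ (pair_red AB fB uf).
  by rewrite inE eq_sym (negbTE yv).
apply/existsP; exists (f :\ v); rewrite (pair_gER AB) //.
exact: subset_trans (subD1set f v) fy.
Qed.

Lemma pair_reduct_updL A B x : pair_reduct A B -> x \in gV A ->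
  pair_reduct (update A [set x] set0) (update B [set x] set0).
Proof.
move=> AB xA; have /and3P [xv xu xB] := pair_gV_mem AB xA.
case: AB => uB vB AV bB rB AL BR A0; split.
- by rewrite gV_updL !inE eq_sym xu.
- by rewrite gV_updL !inE eq_sym xv.
- apply/setP => z; rewrite !gV_updL AV !inE.
  by case: (z == x); case: (z == u); case: (z == v).
- move=> _ /gEL_updL [f fB ->]; rewrite !inE => /andP [_ uf].
  by rewrite eq_sym xv bB.
- by move=> f; rewrite gER_updL => /andP [fB _]; apply: rB.
- move=> _ /gEL_updL [e eA ->]; have /andP [eB ve] := AL e eA.
  apply/andP; split; first by apply/gEL_updL; exists e.
  by rewrite !inE negb_and ve orbT.
- move=> f; rewrite !gER_updL => /andP [fB xf] uf.
  by rewrite BR //= !inE negb_and xf orbT.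
- by rewrite gER_updL negb_and A0.
Qed.

Lemma pair_reduct_updR A B y : pair_reduct A B -> y \in gV A ->
  ~~ [exists e in gER A, e \subset [set y]] ->
  pair_reduct (update A set0 [set y]) (update B set0 [set y]).
Proof.
move=> AB yA noWin; have /and3P [yv yu yB] := pair_gV_mem AB yA.
case: AB => uB vB AV bB rB AL BR A0; split.
- by rewrite gV_updR !inE eq_sym yu.
- by rewrite gV_updR !inE eq_sym yv.
- apply/setP => z; rewrite !gV_updR AV !inE.
  by case: (z == y); case: (z == u); case: (z == v).
- by move=> f; rewrite gEL_updR => /andP [fB _]; apply: bB.
- move=> _ /gER_updR [f fB ->]; rewrite !inE => /andP [_ uf].
  by rewrite eq_sym yv rB.
- move=> e; rewrite gEL_updR => /andP [eA ye]; have /andP [eB ve] := AL e eA.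
  by rewrite gEL_updR eB ye.
- move=> _ /gER_updR [f fB ->]; rewrite in_setD1 negb_and eq_sym yu /= => uf.
  by apply/gER_updR; exists (f :\ v); rewrite ?BR // !setDDl setUC.
- apply/negP => /gER_updR [e eA /esym/eqP]; rewrite setD_eq0 => ey.
  by move/negP: noWin; apply; apply/existsP; exists e; rewrite eA.
Qed.

Lemma pair_reply A B w w' : pair_reduct A B ->
  w \in [set u; v] -> w' \in [set u; v] -> w != w' ->
  relabel_le id A (update (update B set0 [set w]) [set w'] set0).
Proof.
move=> AB /set2P hw /set2P hw' ww'.
have notin_uv z f : z \in [set u; v] -> u \notin f -> v \notin f -> z \notin f.
  by case/set2P => ->.
apply: relabel_le_id.
- apply/setP => z; rewrite gV_updL gV_updR (pair_gV AB) !inE.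
  by case: hw hw' ww' => -> [] -> //; rewrite ?eqxx // => _; case: (z == u); case: (z == v).
- move=> e eA; have /andP [eB ve] := pair_gEL AB eA.
  have ue : u \notin e by apply: contra ve; apply: (pair_blue AB).
  exists (e :\ w'); last exact: subD1set.
  apply/gEL_updL; exists e => //; rewrite gEL_updR eB.
  by apply: notin_uv => //; apply/set2P.
- move=> f; rewrite gER_updL => /andP [/gER_updR [g gB ->]].
  rewrite !inE negb_and eq_sym (negbTE ww') /= => w'g.
  have ug : u \notin g.
    by case: hw' w'g => -> // vg; apply: contra vg; apply: (pair_red AB).
  exists (g :\ v); first exact: (pair_gER AB).
  apply/subsetP => z; rewrite !inE => /andP [zv zg]; rewrite zg andbT.
  by case: hw => ->; [apply: contraNneq ug => <- | ].
Qed.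

Lemma pair_reduct_rmove n A B w : pair_reduct A B -> w \in [set u; v] ->
  rank (value n A false) <= rank (rmove n.+1 B w).
Proof.
(* Left answers Right's move on one of u, v by the other one. *)
move=> AB hw; rewrite /rmove (negbTE (pair_no_rwin AB hw)).
have [w' hw' ww'] : exists2 w', w' \in [set u; v] & w != w'.
  by case/set2P: hw => ->; [exists v | exists u]; rewrite ?inE ?eqxx ?orbT // eq_sym.
have w'B : w' \in gV (update B set0 [set w]).
  rewrite gV_updR !inE eq_sym ww'.
  by case/set2P: hw' => ->; [apply: pair_u AB | apply: pair_v AB].
apply: leq_trans (lmove_le_value n w'B); apply: leq_trans (value_le_lmove _ _ _).
exact: value_relabel_le (pair_reply AB hw hw' ww').
Qed.

Lemma pair_reduct_draw A B : pair_reduct A B -> gV A = set0 ->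
  rank Draw <= rank (value 2 B true).
Proof.
move=> AB A0; apply: leq_trans (lmove_le_value 1 (pair_u AB)); rewrite /lmove.
case: ifP => // _; apply: rmoves_le_value => [|y].
  by apply/set0Pn; exists v; rewrite gV_updL !inE eq_sym uv (pair_v AB).
rewrite gV_updL !inE => /andP [yu yB].
have yv : y = v.
  by apply/eqP/negPn/negP => yv; have := pair_gV AB; move/setP/(_ y); rewrite A0 !inE yu yv yB.
rewrite /rmove ifN // yv; apply/existsP => -[f /andP [/[!gER_updL] /andP [fB uf] fv]].
exact: (negP (pair_red_not_sub_v AB fB uf)).
Qed.

Lemma value_pair_reduct n A B b : pair_reduct A B -> n = #|gV A| ->
  rank (value n A b) <= rank (value n.+2 B b).
Proof.
elim: n A B b => [|n IHn] A B b AB nA.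
  have A0 : gV A = set0 by apply/eqP; rewrite -cards_eq0 -nA.
  case: b; first exact: (pair_reduct_draw AB A0).
  apply: rmoves_le_value => [|y yB]; first by apply/set0Pn; exists u; apply: pair_u AB.
  by move: (pair_gV_split AB yB); rewrite A0 in_set0 orbF; apply: pair_reduct_rmove.
have AN : gV A != set0 by rewrite -cards_eq0 -nA.
have cardA x : x \in gV A -> n = #|gV A :\ x|.
  by move=> xA; move: nA; rewrite (cardsD1 x) xA => -[].
case: b.
- apply: value_le_lmoves => // x xA; have /and3P [_ _ xB] := pair_gV_mem AB xA.
  apply: leq_trans (lmove_le_value n.+2 xB); rewrite /lmove.
  case: ifP => [/existsP [e /andP [eA ex]]|_].
    by rewrite ifT //; apply/existsP; exists e; case/andP: (pair_gEL AB eA) => ->.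
  case: ifP => _; first exact: rank_le2.
  by apply: IHn; [apply: pair_reduct_updL | rewrite gV_updL; apply: cardA].
- apply: rmoves_le_value => [|y yB]; first by apply/set0Pn; exists u; apply: pair_u AB.
  case/orP: (pair_gV_split AB yB) => [|yA]; first exact: pair_reduct_rmove.
  have /and3P [yv _ _] := pair_gV_mem AB yA.
  apply: leq_trans (value_le_rmove n yA) _; rewrite /rmove.
  case: ifP => // winA; rewrite ifN; last by apply: contraFN winA; apply: pair_reduct_rwin.
  by apply: IHn; [apply: pair_reduct_updR; rewrite ?winA | rewrite gV_updR; apply: cardA].
Qed.

Lemma outcome_pair_reduct A B : pair_reduct A B -> outcome_le (outcome A) (outcome B).
Proof.
by move=> AB; rewrite /outcome_le /outcome (card_pair_reduct AB); split; apply: value_pair_reduct.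
Qed.

Lemma pair_reduct_update (G : game T) : u \in gV G -> v \in gV G ->
  (forall e, e \in gEL G :|: gER G -> u \in e -> v \in e) ->
  set0 \notin gER G -> [set v] \notin gER G -> pair_reduct (update G [set u] [set v]) G.
Proof.
move=> uG vG uv_edge G0 vnG.
have blue e : e \in gEL G -> u \in e -> v \in e by move=> eG; apply: uv_edge; rewrite inE eG.
have red e : e \in gER G -> u \in e -> v \in e.
  by move=> eG; apply: uv_edge; rewrite inE eG orbT.
split=> //.
- by rewrite /= setDDl.
- move=> e; rewrite /= inE => /andP [/imsetP [f fG ->]]; rewrite disjoint_sym disjoints1.
  rewrite !inE negb_and eq_sym uv /= => vf.
  have uf : u \notin f by apply: contra vf; apply: blue.
  by rewrite (setDidPl _) ?fG ?vf // disjoint_sym disjoints1.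
- move=> f fG uf; rewrite /= inE disjoint_sym disjoints1 in_setD1 negb_and uf orbT.
  by rewrite andbT; apply: imset_f.
- apply/negP; rewrite /= inE => /andP [/imsetP [f fG /esym/eqP]].
  rewrite setD_eq0 subset1 => /orP [/eqP fv|/eqP f0] _; first by rewrite -fv fG in vnG.
  by rewrite -f0 fG in G0.
Qed.

End Pairing.

Definition dual (T : finType) (G : game T) := Game (gV G) (gER G) (gEL G).

Definition flip r :=
  match r with RightWins => LeftWins | Draw => Draw | LeftWins => RightWins end.

Lemma leq_rank_flip a b : (rank (flip a) <= rank (flip b)) = (rank b <= rank a).
Proof. by case: a; case: b. Qed.

Lemma flip_rmax a b : flip (rmax a b) = rmin (flip a) (flip b).
Proof. by case: a; case: b. Qed.

Lemma flip_rmin a b : flip (rmin a b) = rmax (flip a) (flip b).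
Proof. by case: a; case: b. Qed.

Lemma update_dual (T : finType) (G : game T) S1 S2 :
  update (dual G) S1 S2 = dual (update G S2 S1).
Proof. by rewrite /update /dual /= setUC. Qed.

Lemma value_dual (T : finType) n (G : game T) b :
  value n (dual G) (~~ b) = flip (value n G b).
Proof.
elim: n G b => [//|n IHn] G [].
  rewrite value_false value_true /=; case: (gV G == set0) => //.
  elim: (enum (gV G)) => //= x s ->; rewrite flip_rmax /rmove /lmove /=.
  by congr rmin; case: ifP => // _; rewrite update_dual; apply: (IHn _ false).
rewrite value_true value_false /=; case: (gV G == set0) => //.
elim: (enum (gV G)) => //= x s ->; rewrite flip_rmin /rmove /lmove /=.
by congr rmax; case: ifP => // _; rewrite update_dual; apply: (IHn _ true).
Qed.

Lemma outcome_le_dual (T : finType) (G H : game T) :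
  outcome_le (outcome (dual H)) (outcome (dual G)) -> outcome_le (outcome G) (outcome H).
Proof.
rewrite /outcome_le /outcome /=.
rewrite -[true]/(~~ false) -[false]/(~~ true) !value_dual !leq_rank_flip.
by case.
Qed.

Unset Implicit Arguments.

Theorem lemma8 (T : finType) (G : game T) (u v : T) :
  is_game G ->
  u \in gV G -> v \in gV G ->
  [set u] \notin gEL G :|: gER G ->
  [set v] \notin gEL G :|: gER G ->
  (forall e, e \in gEL G :|: gER G -> u \in e -> v \in e) ->
  [/\ outcome_le (outcome (update G [set u] set0)) (outcome (update G [set v] set0)),
      outcome_le (outcome (update G set0 [set v])) (outcome (update G set0 [set u]))
    & (u != v ->
       outcome_le (outcome (update G [set u] [set v])) (outcome G) /\
       outcome_le (outcome G) (outcome (update G [set v] [set u])))].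
Proof.
move=> [blueG redG] uG vG _ vnG uv_edge.
have set0_notin E : hypergraph (gV G) E -> set0 \notin E.
  by move=> hE; apply/negP => /hE [/eqP].
split.
- exact: (outcome_relabel_le perm_inj (relabel_le_tperm_left uG vG uv_edge)).
- exact: (outcome_relabel_le perm_inj (relabel_le_tperm_right uG vG uv_edge)).
move=> uv; split.
  apply: (outcome_pair_reduct uv); apply: pair_reduct_update => //.
    exact: set0_notin.
  by apply: contra vnG; rewrite inE => ->; rewrite orbT.
apply: outcome_le_dual; rewrite -update_dual.
apply: (outcome_pair_reduct uv); apply: pair_reduct_update => //=.
- by move=> e; rewrite setUC; apply: uv_edge.
- exact: set0_notin.
- by apply: contra vnG; rewrite inE => ->.
Qed.
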